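(* Let $n\geqslant2$. For $\kappa>0$ set $\widetilde\sigma(\kappa)=c(\kappa)/\kappa$ and $\beta=c(\kappa)^2+n\widetilde\sigma(\kappa)-1$. Then $\beta>0$ for every $\kappa>0$.
   Context: $c(\kappa)=\frac{\int_0^\pi\cos\theta\,e^{\kappa\cos\theta}\sin^{n-2}\theta\,\mathrm d\theta}{\int_0^\pi e^{\kappa\cos\theta}\sin^{n-2}\theta\,\mathrm d\theta}$. *)

From Stdlib Require Import Reals.
From Coquelicot Require Import Coquelicot.
Open Scope R_scope.

Definition c (n : nat) (kappa : R) : R :=
  RInt (fun t => cos t * exp (kappa * cos t) * sin t ^ (n - 2)) 0 PI /
  RInt (fun t => exp (kappa * cos t) * sin t ^ (n - 2)) 0 PI.

Definition sigma_tilde (n : nat) (kappa : R) : R := c n kappa / kappa.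

Definition beta (n : nat) (kappa : R) : R :=
  c n kappa ^ 2 + INR n * sigma_tilde n kappa - 1.

From Stdlib Require Import Reals Lra Lia.
From Coquelicot Require Import Coquelicot.
Open Scope R_scope.

(* Write M_a = int_0^pi e^(kappa cos s) sin^(n-2) s cos^a s ds, so that c = M_1 / M_0.
   Integrating by parts twice gives two linear recurrences between M_0, ..., M_3,
   and with them beta = kappa (M_0 M_3 - M_1 M_2) / ((n - 1) M_0^2).  The
   determinant M_0 M_3 - M_1 M_2 is a quarter of the double integral of
   (x - y)^2 (x + y) [w(s) w(t) - w'(s) w'(t)] with x = cos s, y = cos t, where
   w' is the weight for -kappa.  Since w' is w reflected by s |-> pi - s, the
   integrand equals (x - y)^2 (sin s sin t)^(n-2) (x + y)(e^(kappa(x+y)) - e^(-kappa(x+y))),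
   which is nonnegative and positive for 0 < s < t < pi/2. *)

Lemma continuous_of_ex_derive (f : R -> R) x : ex_derive f x -> continuous f x.
Proof. apply (@ex_derive_continuous R_AbsRing R_NormedModule). Qed.

Lemma ex_RInt_of_ex_derive (f : R -> R) a b : (forall x, ex_derive f x) -> ex_RInt f a b.
Proof.
  intros Hf; apply (@ex_RInt_continuous R_CompleteNormedModule).
  intros; apply continuous_of_ex_derive, Hf.
Qed.

Lemma is_RInt_ext_eq (f g : R -> R) a b l l' :
  (forall x, f x = g x) -> l = l' -> is_RInt f a b l -> is_RInt g a b l'.
Proof. intros Hfg <- Hf; apply (@is_RInt_ext R_NormedModule) with f; auto. Qed.

Lemma is_RInt_reflect (f : R -> R) a b l :
  is_RInt f a b l -> is_RInt (fun x => f (a + b - x)) a b l.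
Proof.
  intros Hf.
  assert (Hswap : is_RInt f (-1 * a + (a + b)) (-1 * b + (a + b)) (opp l)).
  { replace (-1 * a + (a + b)) with b by ring; replace (-1 * b + (a + b)) with a by ring.
    apply (@is_RInt_swap R_NormedModule), Hf. }
  apply (@is_RInt_comp_lin R_NormedModule), (@is_RInt_scal R_NormedModule _ _ _ (-1)) in Hswap.
  refine (is_RInt_ext_eq _ _ _ _ _ _ _ _ Hswap); unfold scal, opp; simpl; unfold mult; simpl.
  - intros x; replace (-1 * x + (a + b)) with (a + b - x) by ring; ring.
  - ring.
Qed.

Lemma RInt_gt_0_of_pos_on_prefix (f : R -> R) a c b :
  a < c -> c <= b -> (forall x, ex_derive f x) ->
  (forall x, a < x < c -> 0 < f x) -> (forall x, a <= x <= b -> 0 <= f x) ->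
  0 < RInt f a b.
Proof.
  intros Hac Hcb Hf Hpos Hnn.
  rewrite <- (@RInt_Chasles R_CompleteNormedModule f a c b) by now apply ex_RInt_of_ex_derive.
  assert (0 < RInt f a c).
  { apply RInt_gt_0; [lra | exact Hpos | intros; apply continuous_of_ex_derive, Hf]. }
  assert (0 <= RInt f c b).
  { apply RInt_ge_0; [lra | now apply ex_RInt_of_ex_derive | intros; apply Hnn; lra]. }
  unfold plus; simpl; lra.
Qed.

Lemma mul_exp_sub_exp_opp_ge0 kappa u : 0 < kappa -> 0 <= u * (exp (kappa * u) - exp (- kappa * u)).
Proof.
  intros Hk; destruct (Rtotal_order u 0) as [Hu | [-> | Hu]].
  - assert (exp (kappa * u) < exp (- kappa * u)) by (apply exp_increasing; nra). nra.
  - lra.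
  - assert (exp (- kappa * u) < exp (kappa * u)) by (apply exp_increasing; nra). nra.
Qed.

Lemma mul_exp_sub_exp_opp_gt0 kappa u : 0 < kappa -> 0 < u -> 0 < u * (exp (kappa * u) - exp (- kappa * u)).
Proof.
  intros Hk Hu.
  assert (exp (- kappa * u) < exp (kappa * u)) by (apply exp_increasing; nra). nra.
Qed.

Definition weight (kappa : R) (k : nat) (s : R) : R := exp (kappa * cos s) * sin s ^ k.

Definition moment (kappa : R) (k a : nat) : R :=
  RInt (fun s => weight kappa k s * cos s ^ a) 0 PI.

Lemma is_RInt_moment kappa k a :
  is_RInt (fun s => weight kappa k s * cos s ^ a) 0 PI (moment kappa k a).
Proof.
  apply (@RInt_correct R_CompleteNormedModule), ex_RInt_of_ex_derive.
  intros; unfold weight; auto_derive; auto.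
Qed.

Lemma moment_opp kappa k a : moment (- kappa) k a = (-1) ^ a * moment kappa k a.
Proof.
  unfold moment at 1; apply (@is_RInt_unique R_CompleteNormedModule).
  pose proof (is_RInt_reflect _ _ _ _ (is_RInt_moment kappa k a)) as H.
  apply (@is_RInt_scal R_NormedModule _ _ _ ((-1) ^ a)) in H.
  refine (is_RInt_ext_eq _ _ _ _ _ _ _ eq_refl H).
  intros s; unfold scal; simpl; unfold mult; simpl; unfold weight.
  replace (0 + PI - s) with (PI - s) by ring.
  rewrite sin_PI_x, Rtrigo_facts.cos_pi_minus.
  replace (kappa * - cos s) with (- kappa * cos s) by ring.
  assert (Hsq : (-1) ^ a * (-1) ^ a = 1)
    by (rewrite <- Rpow_mult_distr; replace (-1 * -1) with 1 by ring; apply pow1).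
  replace (- cos s) with (-1 * cos s) by ring; rewrite Rpow_mult_distr.
  transitivity ((-1) ^ a * (-1) ^ a * (exp (- kappa * cos s) * sin s ^ k * cos s ^ a)); [ring|].
  rewrite Hsq; ring.
Qed.

Lemma is_RInt_weight_cubic kappa k c0 c1 c2 c3 :
  is_RInt (fun s => weight kappa k s * (c0 + c1 * cos s + c2 * cos s ^ 2 + c3 * cos s ^ 3)) 0 PI
    (c0 * moment kappa k 0 + c1 * moment kappa k 1 + c2 * moment kappa k 2 + c3 * moment kappa k 3).
Proof.
  pose proof (fun a c => @is_RInt_scal R_NormedModule _ _ _ c _ (is_RInt_moment kappa k a)) as HM.
  pose proof (@is_RInt_plus R_NormedModule _ _ _ _ _ _
    (@is_RInt_plus R_NormedModule _ _ _ _ _ _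
      (@is_RInt_plus R_NormedModule _ _ _ _ _ _ (HM 0%nat c0) (HM 1%nat c1)) (HM 2%nat c2))
    (HM 3%nat c3)) as H.
  refine (is_RInt_ext_eq _ _ _ _ _ _ _ _ H); unfold plus, scal; simpl; unfold mult; simpl.
  - intros s; ring.
  - ring.
Qed.

Lemma weight_cubic_moments_eq0 kappa k c0 c1 c2 c3 (F : R -> R) :
  (forall s, is_derive F s (weight kappa k s * (c0 + c1 * cos s + c2 * cos s ^ 2 + c3 * cos s ^ 3))) ->
  F 0 = F PI ->
  c0 * moment kappa k 0 + c1 * moment kappa k 1 + c2 * moment kappa k 2 + c3 * moment kappa k 3 = 0.
Proof.
  intros HF Hends.
  assert (Hd : is_RInt (fun s => weight kappa k s * (c0 + c1 * cos s + c2 * cos s ^ 2 + c3 * cos s ^ 3))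
                 0 PI (minus (F PI) (F 0))).
  { apply (@is_RInt_derive R_CompleteNormedModule); intros s _; [apply HF|].
    apply continuous_of_ex_derive; unfold weight; auto_derive; auto. }
  rewrite <- (@is_RInt_unique R_CompleteNormedModule _ _ _ _ (is_RInt_weight_cubic kappa k c0 c1 c2 c3)).
  rewrite (@is_RInt_unique R_CompleteNormedModule _ _ _ _ Hd), Hends.
  unfold minus, plus, opp; simpl; ring.
Qed.

Lemma moment_recurrence1 kappa k :
  - kappa * moment kappa k 0 + INR (S k) * moment kappa k 1 + kappa * moment kappa k 2 = 0.
Proof.
  rewrite <- (weight_cubic_moments_eq0 kappa k (- kappa) (INR (S k)) kappa 0
                (fun s => exp (kappa * cos s) * sin s ^ S k)); [ring| |].
  - intros s; unfold weight; auto_derive; auto.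
    change (match k with 0%nat => 1 | S _ => INR k + 1 end) with (INR (S k)).
    pose proof (sin2 s) as Hsin; unfold Rsqr in Hsin.
    transitivity (- kappa * exp (kappa * cos s) * sin s ^ k * (sin s * sin s)
                  + INR (S k) * exp (kappa * cos s) * sin s ^ k * cos s); [ring|].
    rewrite Hsin; ring.
  - rewrite sin_0, sin_PI; simpl; ring.
Qed.

Lemma moment_recurrence2 kappa k :
  - moment kappa k 0 - kappa * moment kappa k 1 + INR (S (S k)) * moment kappa k 2
  + kappa * moment kappa k 3 = 0.
Proof.
  rewrite <- (weight_cubic_moments_eq0 kappa k (-1) (- kappa) (INR (S (S k))) kappa
                (fun s => cos s * exp (kappa * cos s) * sin s ^ S k)); [ring| |].
  - intros s; unfold weight; auto_derive; auto.
    change (match k with 0%nat => 1 | S _ => INR k + 1 end) with (INR (S k)).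
    rewrite !S_INR.
    pose proof (sin2 s) as Hsin; unfold Rsqr in Hsin.
    transitivity (- (1 + kappa * cos s) * exp (kappa * cos s) * sin s ^ k * (sin s * sin s)
                  + (INR k + 1) * exp (kappa * cos s) * sin s ^ k * (cos s * cos s)); [ring|].
    rewrite Hsin; ring.
  - rewrite sin_0, sin_PI; simpl; ring.
Qed.

Definition kernel (kappa : R) (k : nat) (s t : R) : R :=
  (cos s - cos t) ^ 2 * (cos s + cos t) *
  (weight kappa k s * weight kappa k t - weight (- kappa) k s * weight (- kappa) k t).

Lemma kernel_factor kappa k s t :
  kernel kappa k s t = (cos s - cos t) ^ 2 * (sin s * sin t) ^ k *
    ((cos s + cos t) * (exp (kappa * (cos s + cos t)) - exp (- kappa * (cos s + cos t)))).
Proof.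
  unfold kernel, weight; rewrite Rpow_mult_distr.
  replace (kappa * (cos s + cos t)) with (kappa * cos s + kappa * cos t) by ring.
  replace (- kappa * (cos s + cos t)) with (- kappa * cos s + - kappa * cos t) by ring.
  rewrite !exp_plus; ring.
Qed.

Lemma kernel_ge0 kappa k s t : 0 < kappa -> 0 <= s <= PI -> 0 <= t <= PI -> 0 <= kernel kappa k s t.
Proof.
  intros Hk Hs Ht; rewrite kernel_factor.
  apply Rmult_le_pos; [apply Rmult_le_pos|].
  - apply pow2_ge_0.
  - apply pow_le, Rmult_le_pos; apply sin_ge_0; lra.
  - now apply mul_exp_sub_exp_opp_ge0.
Qed.

Lemma kernel_gt0 kappa k s t : 0 < kappa -> 0 < s -> s < t -> t < PI / 2 -> 0 < kernel kappa k s t.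
Proof.
  intros Hk Hs Hst Ht; pose proof PI_RGT_0.
  assert (cos t < cos s) by (apply cos_decreasing_1; lra).
  assert (0 < cos t) by (apply cos_gt_0; lra).
  assert (0 < sin s) by (apply sin_gt_0; lra).
  assert (0 < sin t) by (apply sin_gt_0; lra).
  rewrite kernel_factor.
  apply Rmult_lt_0_compat; [apply Rmult_lt_0_compat|].
  - apply pow_lt; lra.
  - apply pow_lt, Rmult_lt_0_compat; lra.
  - apply mul_exp_sub_exp_opp_gt0; lra.
Qed.

Definition cubic_moment (kappa : R) (k : nat) (y : R) : R :=
  moment kappa k 3 - y * moment kappa k 2 - y ^ 2 * moment kappa k 1 + y ^ 3 * moment kappa k 0.

Definition kernel_marginal (kappa : R) (k : nat) (t : R) : R :=
  weight kappa k t * cubic_moment kappa k (cos t)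
  - weight (- kappa) k t * cubic_moment (- kappa) k (cos t).

Lemma is_RInt_kernel kappa k t :
  is_RInt (fun s => kernel kappa k s t) 0 PI (kernel_marginal kappa k t).
Proof.
  set (y := cos t).
  (* (x - y)^2 (x + y) = y^3 - y^2 x - y x^2 + x^3 *)
  pose proof (is_RInt_weight_cubic kappa k (y ^ 3) (- y ^ 2) (- y) 1) as Hp.
  pose proof (is_RInt_weight_cubic (- kappa) k (y ^ 3) (- y ^ 2) (- y) 1) as Hm.
  apply (@is_RInt_scal R_NormedModule _ _ _ (weight kappa k t)) in Hp.
  apply (@is_RInt_scal R_NormedModule _ _ _ (weight (- kappa) k t)) in Hm.
  pose proof (@is_RInt_minus R_NormedModule _ _ _ _ _ _ Hp Hm) as H.
  refine (is_RInt_ext_eq _ _ _ _ _ _ _ _ H);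
    unfold kernel, kernel_marginal, cubic_moment, minus, plus, opp, scal; simpl; unfold mult; simpl.
  - intros s; fold y; ring.
  - fold y; ring.
Qed.

Lemma kernel_marginal_ge0 kappa k t : 0 < kappa -> 0 <= t <= PI -> 0 <= kernel_marginal kappa k t.
Proof.
  intros Hk Ht; pose proof PI_RGT_0.
  rewrite <- (@is_RInt_unique R_CompleteNormedModule _ _ _ _ (is_RInt_kernel kappa k t)).
  apply RInt_ge_0; [lra| |intros; apply kernel_ge0; lra].
  apply ex_RInt_of_ex_derive; intros; unfold kernel, weight; auto_derive; auto.
Qed.

Lemma kernel_marginal_gt0 kappa k t : 0 < kappa -> 0 < t < PI / 2 -> 0 < kernel_marginal kappa k t.
Proof.
  intros Hk Ht; pose proof PI_RGT_0.
  rewrite <- (@is_RInt_unique R_CompleteNormedModule _ _ _ _ (is_RInt_kernel kappa k t)).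
  apply RInt_gt_0_of_pos_on_prefix with t; try lra.
  - intros; unfold kernel, weight; auto_derive; auto.
  - intros; apply kernel_gt0; lra.
  - intros; apply kernel_ge0; lra.
Qed.

Lemma is_RInt_kernel_marginal kappa k :
  is_RInt (kernel_marginal kappa k) 0 PI
    (4 * (moment kappa k 0 * moment kappa k 3 - moment kappa k 1 * moment kappa k 2)).
Proof.
  pose proof (is_RInt_weight_cubic kappa k (moment kappa k 3) (- moment kappa k 2)
                (- moment kappa k 1) (moment kappa k 0)) as Hp.
  pose proof (is_RInt_weight_cubic (- kappa) k (moment (- kappa) k 3) (- moment (- kappa) k 2)
                (- moment (- kappa) k 1) (moment (- kappa) k 0)) as Hm.
  pose proof (@is_RInt_minus R_NormedModule _ _ _ _ _ _ Hp Hm) as H.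
  refine (is_RInt_ext_eq _ _ _ _ _ _ _ _ H);
    unfold kernel_marginal, cubic_moment, minus, plus, opp; simpl.
  - intros t; ring.
  - rewrite !moment_opp; simpl; ring.
Qed.

Lemma moment_det_gt0 kappa k : 0 < kappa ->
  0 < moment kappa k 0 * moment kappa k 3 - moment kappa k 1 * moment kappa k 2.
Proof.
  intros Hk; pose proof PI_RGT_0.
  enough (0 < 4 * (moment kappa k 0 * moment kappa k 3 - moment kappa k 1 * moment kappa k 2)) by lra.
  rewrite <- (@is_RInt_unique R_CompleteNormedModule _ _ _ _ (is_RInt_kernel_marginal kappa k)).
  apply RInt_gt_0_of_pos_on_prefix with (PI / 2); try lra.
  - intros; unfold kernel_marginal, cubic_moment, weight; auto_derive; auto.
  - intros; apply kernel_marginal_gt0; lra.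
  - intros; apply kernel_marginal_ge0; lra.
Qed.

Lemma moment0_gt0 kappa k : 0 < moment kappa k 0.
Proof.
  pose proof PI_RGT_0; unfold moment.
  apply RInt_gt_0; [lra| |].
  - intros s Hs; unfold weight; rewrite pow_O, Rmult_1_r.
    apply Rmult_lt_0_compat; [apply exp_pos | apply pow_lt, sin_gt_0; lra].
  - intros; apply continuous_of_ex_derive; unfold weight; auto_derive; auto.
Qed.

Lemma c_moment_ratio n kappa : c n kappa = moment kappa (n - 2) 1 / moment kappa (n - 2) 0.
Proof.
  unfold c, moment, weight; f_equal; apply RInt_ext; intros; simpl; ring.
Qed.

Lemma moment_ratio_identity kappa r m0 m1 m2 m3 :
  kappa <> 0 -> r <> 0 -> m0 <> 0 ->
  - kappa * m0 + r * m1 + kappa * m2 = 0 ->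
  - m0 - kappa * m1 + (r + 1) * m2 + kappa * m3 = 0 ->
  (m1 / m0) ^ 2 + (r + 1) * (m1 / m0 / kappa) - 1 = kappa * (m0 * m3 - m1 * m2) / (r * m0 ^ 2).
Proof.
  intros Hk Hr Hm0 Hrec1 Hrec2.
  assert (E2 : m2 = m0 - r * m1 / kappa) by (field_simplify_eq; lra).
  assert (E3 : m3 = (m0 + kappa * m1 - (r + 1) * m2) / kappa) by (field_simplify_eq; lra).
  rewrite E3, E2; field; auto.
Qed.

Theorem lemma2 (n : nat) (hn : (2 <= n)%nat) (kappa : R) (hk : 0 < kappa) :
  0 < beta n kappa.
Proof.
  destruct n as [|[|k]]; try lia.
  unfold beta, sigma_tilde; rewrite c_moment_ratio.
  replace (S (S k) - 2)%nat with k by lia.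
  pose proof (moment0_gt0 kappa k) as Hm0.
  pose proof (moment_recurrence2 kappa k) as Hrec2; rewrite S_INR in Hrec2 |- *.
  rewrite (moment_ratio_identity kappa (INR (S k)) _ _ (moment kappa k 2) (moment kappa k 3));
    try lra; [| apply not_0_INR; lia | apply moment_recurrence1].
  apply Rdiv_lt_0_compat.
  - apply Rmult_lt_0_compat; [lra | now apply moment_det_gt0].
  - apply Rmult_lt_0_compat; [apply lt_0_INR; lia | apply pow_lt; lra].
Qed.
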